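(* Let $r\ge3$. For every $d\in\{1,\dots,r-1\}$ there exists a simple Steiner bundle $\mathcal F_d$ on $\mathbb P^{r-1}$ that is $(d-1)$-homogeneous but not $d$-homogeneous.
   Context: $k$ algebraically closed of arbitrary characteristic; $A_n$ denotes an $n$-dimensional $k$-vector space with fixed basis, $A_e\subseteq A_r$ for $e\le r$, and $\mathbb P^{r-1}=\mathbb P(A_r)$. A Steiner bundle on $\mathbb P^{r-1}$ is a vector bundle $\mathcal F$ with an exact sequence $(0)\to\mathcal O_{\mathbb P^{r-1}}(-1)^s\to\mathcal O_{\mathbb P^{r-1}}^t\to\mathcal F\to(0)$. It is simple if its endomorphism ring is $k$. Every injective linear map $\alpha:A_{e+1}\to A_r$ induces a linear embedding $\hat\alpha:\mathbb P(A_{e+1})\to\mathbb P(A_r)$; a vector bundle $\mathcal F$ on $\mathbb P^{r-1}$ is $e$-homogeneous ($0\le e\le r-1$) if $\hat\alpha^*\mathcal F\cong\hat\beta^*\mathcal F$ for all injective linear maps $\alpha,\beta:A_{e+1}\to A_r$. *)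

From HB Require Import structures.
From mathcomp Require Export all_boot all_order all_algebra.
Set Implicit Arguments. Unset Strict Implicit. Unset Printing Implicit Defensive.
Export GRing.Theory.
Local Open Scope ring_scope.

Section Steiner.
Variable k : fieldType.

(* A morphism O(-1)^s -> O^t on P(A_n) is a t x s matrix of linear forms,
   given by its coefficient matrices M i (i < n):  M(x) = \sum_i x_i M_i. *)
Definition evalM n t s (M : 'I_n -> 'M[k]_(t, s)) (x : 'rV[k]_n) : 'M[k]_(t, s) :=
  \sum_(i < n) x 0 i *: M i.

(* The cokernel is a (Steiner) vector bundle iff M(x) is injective at every point. *)
Definition steiner n t s (M : 'I_n -> 'M[k]_(t, s)) : Prop :=
  forall x : 'rV[k]_n, x != 0 -> \rank (evalM M x) = s.

(* Pullback along the linear map alpha : A_{e+1} -> A_n, y |-> y *m a. *)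
Definition pullback e n t s (a : 'M[k]_(e.+1, n)) (M : 'I_n -> 'M[k]_(t, s))
  : 'I_e.+1 -> 'M[k]_(t, s) :=
  fun j => \sum_(i < n) a j i *: M i.

(* Isomorphism of the cokernels: GL_t x GL_s equivalence of the presentations. *)
Definition steiner_iso m t s (M N : 'I_m -> 'M[k]_(t, s)) : Prop :=
  exists (P : 'M[k]_t) (Q : 'M[k]_s),
    [/\ P \in unitmx, Q \in unitmx & forall j, P *m M j = N j *m Q].

(* End(F) = {(P,Q) | P M = M Q}; simple iff it consists of the scalars. *)
Definition steiner_simple n t s (M : 'I_n -> 'M[k]_(t, s)) : Prop :=
  forall (P : 'M[k]_t) (Q : 'M[k]_s), (forall i, P *m M i = M i *m Q) ->
    exists c : k, P = c%:M /\ Q = c%:M.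

Definition homogeneous e n t s (M : 'I_n -> 'M[k]_(t, s)) : Prop :=
  forall a b : 'M[k]_(e.+1, n), row_free a -> row_free b ->
    steiner_iso (pullback a M) (pullback b M).

End Steiner.

From mathcomp Require Import all_boot all_order all_algebra perm.
Set Implicit Arguments. Unset Strict Implicit. Unset Printing Implicit Defensive.
Import GRing.Theory.
Local Open Scope ring_scope.

(** Write n = d + 1 and let P be the pencil spanned by the n x (n + 1) blocks
    (1 | 0) and (0 | 1), placed on the first n coordinates of A_r.  F_d is
    presented so that its multiplication map A_r (x) k^(n+1) -> k^t is the
    quotient by P.  Every nonzero member of P has rank n, so no tensor of rank
    at most d lies in the kernel.  Pure tensors give that the presentation is
    injective at every point, and restriction to any d-dimensional subspace
    gives an injective multiplication map, so all these restrictions are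
    equivalent: F_d is (d-1)-homogeneous.  An endomorphism must preserve P
    under right multiplication, which only scalars do.  Restricted to the
    first n coordinates the kernel is P itself; restricted to the coordinates
    shifted by one (available when n < r) it is zero, and restricted to the
    first n coordinates with the first two swapped (used when d >= 2, since
    for d = 1 every coordinate change of A_2 is undone by a right translation
    of P) it is not a right translate of P.  Hence F_d is not d-homogeneous. *)

Lemma widen_ord_inj m n (h : (m <= n)%N) : injective (widen_ord h).
Proof. by move=> i j /(congr1 val) /= /val_inj. Qed.

Section LinearAlgebra.
Variable k : fieldType.

Lemma mxrank_trMfree m n p (A : 'M[k]_(m, n)) (V : 'M[k]_(m, p)) :
  row_free A -> \rank (A^T *m V) = \rank V.
Proof. by move=> fA; rewrite -[LHS]mxrank_tr trmx_mul trmxK mxrankMfree // mxrank_tr. Qed.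

Lemma row_free_equiv m n (A B : 'M[k]_(m, n)) :
  row_free A -> row_free B -> exists2 R, R \in unitmx & A *m R = B.
Proof.
move=> fA fB; have /row_freeP [A' AA'] := fA.
have rkAB : \rank (A *m (A' *m B)) = \rank A.
  by rewrite mulmxA AA' mul1mx (eqP fA) (eqP fB).
have [R uR eR] := complete_unitmx rkAB.
by exists R; rewrite // -eR mulmxA AA' mul1mx.
Qed.

Lemma mul_col_base_coker_eq0 m n (K : 'M[k]_(m, n)) (v : 'rV[k]_n) :
  (v *m col_base (cokermx K) == 0) = (v <= K)%MS.
Proof.
rewrite submxE -[in RHS](mulmx_base (cokermx K)) mulmxA.
apply/eqP/eqP => [-> | v0]; first by rewrite mul0mx.
by apply: (row_free_inj (row_base_free (cokermx K))); rewrite v0 mul0mx.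
Qed.

Lemma sub_adds_rVP n (u v w : 'rV[k]_n) :
  reflect (exists a b, w = a *: u + b *: v) (w <= u + v)%MS.
Proof.
apply: (iffP sub_addsmxP) => [[[a b] /= ->] | [a [b ->]]].
  by exists (a 0 0), (b 0 0); rewrite -!mul_scalar_mx -!mx11_scalar.
by exists (a%:M, b%:M); rewrite /= !mul_scalar_mx.
Qed.

Section RowSub.
Variables (m n : nat) (f : 'I_m -> 'I_n).
Hypothesis f_inj : injective f.

Lemma mxsub_inj1 : mxsub f f (1%:M : 'M[k]_n) = 1%:M.
Proof. by apply/matrixP => i j; rewrite !mxE (inj_eq f_inj). Qed.

Lemma rowsub1_mul_tr : rowsub f 1%:M *m (rowsub f 1%:M)^T = 1%:M :> 'M[k]_m.
Proof. by rewrite trmx_mxsub trmx1 -mxsub_mul mul1mx mxsub_inj1. Qed.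

Lemma rowsub1_free : row_free (rowsub f (1%:M : 'M[k]_n)).
Proof. by apply/row_freeP; exists (rowsub f 1%:M)^T; rewrite rowsub1_mul_tr. Qed.

Lemma rowsub_trmx_rowsub1 p (V : 'M[k]_(m, p)) :
  rowsub f ((rowsub f 1%:M)^T *m V) = V.
Proof. by rewrite -mul_rowsub_mx trmx_mxsub trmx1 -mxsubrc mxsub_inj1 mul1mx. Qed.

End RowSub.

Lemma row_trmx_rowsub1 m n p (f : 'I_m -> 'I_n) (i : 'I_n) (V : 'M[k]_(m, p)) :
  (forall j, f j != i) -> row i ((rowsub f 1%:M)^T *m V) = 0.
Proof.
move=> fi; rewrite row_mul.
suff -> : row i (rowsub f (1%:M : 'M[k]_n))^T = 0 by rewrite mul0mx.
by apply/rowP => j; rewrite !mxE (negbTE (fi j)).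
Qed.

End LinearAlgebra.

Section Contraction.
Variable k : fieldType.

(* The multiplication map A_n (x) k^s -> k^t, x (x) u |-> F(x) u, on row
   vectors: Z encodes the tensor sum_i e_i (x) row i Z. *)
Definition contract n t s (F : 'I_n -> 'M[k]_(t, s)) (Z : 'M[k]_(n, s)) : 'rV[k]_t :=
  \sum_i row i Z *m (F i)^T.

Lemma contract_evalM n t s (F : 'I_n -> 'M[k]_(t, s)) x u :
  u *m (evalM F x)^T = contract F (x^T *m u).
Proof.
rewrite /evalM /contract linear_sum mulmx_sumr; apply: eq_bigr => i _.
rewrite linearZ /= -scalemxAr row_mul [row i x^T]mx11_scalar mul_scalar_mx.
by rewrite !mxE -scalemxAl.
Qed.

Lemma contract_pullback e n t s (a : 'M[k]_(e.+1, n)) (F : 'I_n -> 'M[k]_(t, s)) Y :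
  contract (pullback a F) Y = contract F (a^T *m Y).
Proof.
rewrite /contract /pullback.
under eq_bigr do rewrite linear_sum mulmx_sumr.
rewrite exchange_big /=; apply: eq_bigr => i _.
rewrite row_mul (mulmx_sum_row (row i a^T)) mulmx_suml; apply: eq_bigr => j _.
by rewrite linearZ /= -scalemxAr -scalemxAl !mxE.
Qed.

Lemma contract_iso n t s (F G : 'I_n -> 'M[k]_(t, s)) P Q :
  (forall j, P *m F j = G j *m Q) ->
  forall Y, contract F Y *m P^T = contract G (Y *m Q^T).
Proof.
move=> FG Y; rewrite /contract mulmx_suml; apply: eq_bigr => i _.
by rewrite -mulmxA -trmx_mul FG trmx_mul row_mul !mulmxA.
Qed.

Lemma contract_inj n t s (F G : 'I_n -> 'M[k]_(t, s)) :
  (forall Y, contract F Y = contract G Y) -> F =1 G.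
Proof.
have deltaE (H : 'I_n -> 'M[k]_(t, s)) j l : contract H (delta_mx j l) = row l (H j)^T.
  rewrite /contract (bigD1 j) //= big1 ?addr0 => [|i /negbTE ij].
    by rewrite [RHS]rowE; congr (_ *m _); apply/rowP => p; rewrite !mxE eqxx.
  suff -> : row i (delta_mx j l : 'M[k]_(n, s)) = 0 by rewrite mul0mx.
  by apply/rowP => p; rewrite !mxE ij.
move=> FG j; apply: trmx_inj; apply/row_matrixP => l.
by rewrite -!deltaE FG.
Qed.

Lemma steiner_iso_of_contract n t s (F G : 'I_n -> 'M[k]_(t, s)) R :
  R \in unitmx -> (forall Y, contract F Y *m R = contract G Y) -> steiner_iso F G.
Proof.
move=> uR FG; exists R^T, 1%:M; split; rewrite ?unitmx_tr ?unitmx1 // => j.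
have RF i : R^T *m F i = (R^T *m F i) *m 1%:M by rewrite mulmx1.
rewrite mulmx1; apply: (contract_inj (F := fun j => R^T *m F j)) => Y.
by rewrite -FG -[in RHS](trmxK R) (contract_iso (G := fun j => R^T *m F j) RF) trmx1 mulmx1.
Qed.

Lemma steiner_iso_kernel e n t s (a b : 'M[k]_(e.+1, n)) (F : 'I_n -> 'M[k]_(t, s)) :
  steiner_iso (pullback a F) (pullback b F) ->
  exists2 R, R \in unitmx &
    forall Y, contract F (a^T *m Y) = 0 -> contract F (b^T *m (Y *m R)) = 0.
Proof.
case=> P [Q [_ uQ PQ]]; exists Q^T; rewrite ?unitmx_tr // => Y Y0.
by rewrite -contract_pullback -(contract_iso PQ) contract_pullback Y0 mul0mx.
Qed.

Lemma steiner_of_contract n t s (F : 'I_n -> 'M[k]_(t, s)) :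
  (forall (x : 'rV_n) u, x != 0 -> contract F (x^T *m u) = 0 -> u = 0) -> steiner F.
Proof.
move=> Finj x x0; rewrite -mxrank_tr; apply/eqP/inj_row_free => u.
by rewrite contract_evalM; apply: Finj.
Qed.

Lemma scalar_of_contract n t s (F : 'I_n -> 'M[k]_(t, s)) P c :
  (forall w, exists Z, contract F Z = w) ->
  (forall Z, contract F Z *m P^T = c *: contract F Z) -> P = c%:M.
Proof.
move=> Fsurj FP; apply: trmx_inj; rewrite tr_scalar_mx.
apply/row_matrixP => i; rewrite !rowE mul_mx_scalar.
by have [Z <-] := Fsurj (delta_mx 0 i); rewrite FP.
Qed.

Definition presentation n s t (B : 'M[k]_(n * s, t)) (i : 'I_n) : 'M[k]_(t, s) :=
  \matrix_(p, j) B (mxvec_index i j) p.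

Lemma contract_presentation n s t (B : 'M[k]_(n * s, t)) Z :
  contract (presentation B) Z = mxvec Z *m B.
Proof.
rewrite mulmx_sum_row (reindex _ (curry_mxvec_bij n s)) /=.
transitivity (\sum_i \sum_j mxvec Z 0 (mxvec_index i j) *: row (mxvec_index i j) B);
  last by rewrite pair_bigA; apply: eq_bigr => -[i j].
apply: eq_bigr => i _; rewrite mulmx_sum_row; apply: eq_bigr => j _.
by rewrite mxvecE mxE; congr (_ *: _); apply/rowP => p; rewrite !mxE.
Qed.

Lemma contract_presentation_surj n s t (B : 'M[k]_(n * s, t)) w :
  row_full B -> exists Z, contract (presentation B) Z = w.
Proof.
move=> /row_fullP [B' B'B]; exists (vec_mx (w *m B')).
by rewrite contract_presentation vec_mxK -mulmxA B'B mulmx1.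
Qed.

Lemma homogeneous_presentation e n s t (B : 'M[k]_(n * s, t)) :
  (forall a : 'M_(e.+1, n), row_free a ->
     forall Y, contract (presentation B) (a^T *m Y) = 0 -> Y = 0) ->
  homogeneous e (presentation B).
Proof.
move=> Binj a b fa fb.
pose S (c : 'M_(e.+1, n)) := lin_mx (mulmx c^T) *m B.
have SE c Y : mxvec Y *m S c = contract (presentation B) (c^T *m Y).
  by rewrite mulmxA mul_vec_lin contract_presentation.
have Sfree c : row_free c -> row_free (S c).
  move=> fc; apply: inj_row_free => v.
  by rewrite -[v]vec_mxK SE => /(Binj _ fc) ->; rewrite linear0.
have [R uR eR] := row_free_equiv (Sfree a fa) (Sfree b fb).
by apply: (steiner_iso_of_contract uR) => Y; rewrite !contract_pullback -!SE -mulmxA eR.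
Qed.

End Contraction.

Section Pencil.
Variables (k : fieldType) (e : nat).
Local Notation n := e.+2.

Definition pen0 : 'M[k]_(n, n.+1) := rowsub (widen_ord (leqnSn n)) 1%:M.
Definition pen1 : 'M[k]_(n, n.+1) := rowsub (lift ord0) 1%:M.

Lemma pencilE al be (i : 'I_n) (j : 'I_n.+1) :
  (al *: pen0 + be *: pen1) i j = al * (j == i :> nat)%:R + be * (j == i.+1 :> nat)%:R.
Proof. by rewrite !mxE -!val_eqE /= !(eq_sym (nat_of_ord j)). Qed.

Lemma pen0_mulE (R : 'M[k]_n.+1) i j : (pen0 *m R) i j = R (inord i) j.
Proof.
rewrite mul_rowsub_mx mul1mx mxE; congr (R _ j).
by apply/val_inj; rewrite /= inordK // leqW.
Qed.

Lemma pen1_mulE (R : 'M[k]_n.+1) i j : (pen1 *m R) i j = R (inord i.+1) j.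
Proof.
rewrite mul_rowsub_mx mul1mx mxE; congr (R _ j).
by apply/val_inj; rewrite /= inordK // ltnS.
Qed.

Lemma pen0_free : row_free pen0.
Proof. exact/rowsub1_free/widen_ord_inj. Qed.

Lemma pen_row_free al be : (al != 0) || (be != 0) -> row_free (al *: pen0 + be *: pen1).
Proof.
have [-> | be0 _] := eqVneq be 0.
  rewrite orbF scale0r addr0 => al0.
  by rewrite /row_free mxrank_scale_nz //; apply: pen0_free.
(* Right multiplication by pen1^T gives a lower triangular matrix with be on the diagonal. *)
set M := (al *: pen0 + be *: pen1) *m pen1^T.
have ME i j : M i j = al * (i == j.+1 :> nat)%:R + be * (i == j :> nat)%:R.
  rewrite /M mulmxDl -!scalemxAl rowsub1_mul_tr; last exact: lift_inj.
  by rewrite /pen0 /pen1 trmx_mxsub trmx1 -mxsub_mul mul1mx !mxE -!val_eqE.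
have trigM : is_trig_mx M.
  apply/is_trig_mxP => i j ij.
  have ij1 : (i < j.+1)%N by rewrite ltnS ltnW.
  by rewrite ME (ltn_eqF ij) (ltn_eqF ij1) !mulr0 addr0.
have uM : M \in unitmx.
  rewrite unitmxE det_trig // unitfE; apply/prodf_neq0 => i _.
  by rewrite ME (ltn_eqF (ltnSn i)) eqxx mulr0 add0r mulr1.
by apply/row_freeP; exists (pen1^T *m invmx M); rewrite mulmxA mulmxV.
Qed.

Lemma pen_stable_scalar al be ga de (R : 'M[k]_n.+1) :
  pen0 *m R = al *: pen0 + be *: pen1 -> pen1 *m R = ga *: pen0 + de *: pen1 ->
  R = al%:M.
Proof.
move=> E0 E1.
have R0 (i : 'I_n) j : R (inord i) j = al * (j == i :> nat)%:R + be * (j == i.+1 :> nat)%:R.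
  by rewrite -pen0_mulE E0 pencilE.
have R1 (i : 'I_n) j : R (inord i.+1) j = ga * (j == i :> nat)%:R + de * (j == i.+1 :> nat)%:R.
  by rewrite -pen1_mulE E1 pencilE.
have row1 (j : nat) : (j <= n)%N ->
    al * (j == 1)%:R + be * (j == 2)%:R = ga * (j == 0)%:R + de * (j == 1)%:R.
  by move=> jn; have := R0 (inord 1) (inord j); rewrite !inordK // (R1 ord0) inordK.
have := row1 0%N; have := row1 1%N; have := row1 2%N.
rewrite !mulr0 !mulr1 !addr0 !add0r => /(_ isT) be0 /(_ isT) alde /(_ isT) /esym ga0.
apply/matrixP => i j; rewrite mxE -val_eqE /= eq_sym.
have [ilt | ige] := ltnP i n.
  by have := R0 (Ordinal ilt) j; rewrite /= inord_val be0 mul0r addr0 mulr_natr.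
have -> : i = inord (ord_max : 'I_n).+1.
  by apply/val_inj; rewrite /= inordK //; apply/anti_leq; rewrite ige -ltnS ltn_ord.
by rewrite R1 ga0 -alde mul0r add0r mulr_natr inordK.
Qed.

Lemma pen_swap_unstable al be ga de (R : 'M[k]_n.+1) : (0 < e)%N -> R \in unitmx ->
  xrow ord0 (inord 1) (pen0 *m R) = al *: pen0 + be *: pen1 ->
  xrow ord0 (inord 1) (pen1 *m R) = ga *: pen0 + de *: pen1 -> False.
Proof.
move=> e_gt0 uR E0 E1; pose s := tperm (ord0 : 'I_n) (inord 1).
have R0 (i : 'I_n) j : R (inord (s i)) j = al * (j == i :> nat)%:R + be * (j == i.+1 :> nat)%:R.
  by have := congr1 (fun A : 'M[k]_(n, n.+1) => A i j) E0; rewrite /= mxE pen0_mulE pencilE.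
have R1 (i : 'I_n) j : R (inord (s i).+1) j = ga * (j == i :> nat)%:R + de * (j == i.+1 :> nat)%:R.
  by have := congr1 (fun A : 'M[k]_(n, n.+1) => A i j) E1; rewrite /= mxE pen1_mulE pencilE.
have s0 : s ord0 = inord 1 by rewrite /s tpermL.
have s1 : s (inord 1) = ord0 by rewrite /s tpermR.
have s2 : s (inord 2) = inord 2.
  by rewrite /s tpermD // -val_eqE /= !inordK.
have row1 (j : nat) : (j <= n)%N ->
    al * (j == 0)%:R + be * (j == 1)%:R = ga * (j == 1)%:R + de * (j == 2)%:R.
  move=> jn; have := R0 ord0 (inord j); rewrite s0 /= !inordK // => <-.
  by have := R1 (inord 1) (inord j); rewrite s1 /= !inordK.
have row2 (j : nat) : (j <= n)%N ->
    al * (j == 2)%:R + be * (j == 3)%:R = ga * (j == 0)%:R + de * (j == 1)%:R.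
  move=> jn; have := R0 (inord 2) (inord j); rewrite s2 /= !inordK // => <-.
  by have := R1 ord0 (inord j); rewrite s0 /= !inordK.
have := row1 0%N isT; have := row1 1%N isT; have := row2 3%N e_gt0.
rewrite !mulr0 !mulr1 !addr0 !add0r => be0 bega al0.
have : row (inord 1) R = 0.
  apply/rowP => j; have := R0 ord0 j; rewrite s0 /= inordK // !mxE => ->.
  by rewrite al0 be0 !mul0r addr0.
rewrite rowE -(mul0mx _ R) => /(row_free_inj (A := R)).
rewrite row_free_unit => /(_ uR) /matrixP /(_ 0 (inord 1)).
by rewrite !mxE !eqxx => /eqP; rewrite oner_eq0.
Qed.

End Pencil.

Section Bundle.
Variables (k : fieldType) (r' e : nat).
Local Notation r := r'.+1.
Local Notation n := e.+2.
Hypothesis n_le_r : (n <= r)%N.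

Definition incl : 'M[k]_(n, r) := rowsub (widen_ord n_le_r) 1%:M.

Definition pencil_space :=
  (mxvec (incl^T *m pen0 k e) + mxvec (incl^T *m pen1 k e))%MS.

Definition pencil_bundle := presentation (col_base (cokermx pencil_space)).

Lemma incl_free : row_free incl.
Proof. exact/rowsub1_free/widen_ord_inj. Qed.

Lemma inclTK p : cancel (@mulmx _ r n p incl^T) (rowsub (widen_ord n_le_r)).
Proof. exact/rowsub_trmx_rowsub1/widen_ord_inj. Qed.

Lemma contract_pencil_bundle_eq0 Z :
  contract pencil_bundle Z = 0 <-> exists al be, Z = incl^T *m (al *: pen0 k e + be *: pen1 k e).
Proof.
have vecE al be : mxvec (incl^T *m (al *: pen0 k e + be *: pen1 k e)) =
    al *: mxvec (incl^T *m pen0 k e) + be *: mxvec (incl^T *m pen1 k e).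
  by rewrite mulmxDr -!scalemxAr linearD !linearZ.
rewrite contract_presentation; split => [/eqP | [al [be ->]]].
  rewrite mul_col_base_coker_eq0 => /sub_adds_rVP [al [be eZ]].
  by exists al, be; apply: (can_inj mxvecK); rewrite vecE.
by apply/eqP; rewrite mul_col_base_coker_eq0 vecE; apply/sub_adds_rVP; exists al, be.
Qed.

Lemma contract_pencil_bundle_incl_eq0 V :
  contract pencil_bundle (incl^T *m V) = 0 <-> exists al be, V = al *: pen0 k e + be *: pen1 k e.
Proof.
split=> [/contract_pencil_bundle_eq0 [al [be /(can_inj (@inclTK _)) ->]] | [al [be ->]]].
  by exists al, be.
by apply/contract_pencil_bundle_eq0; exists al, be.
Qed.

Lemma contract_pencil_bundle_pen0 : contract pencil_bundle (incl^T *m pen0 k e) = 0.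
Proof. by apply/contract_pencil_bundle_incl_eq0; exists 1, 0; rewrite scale1r scale0r addr0. Qed.

Lemma contract_pencil_bundle_pen1 : contract pencil_bundle (incl^T *m pen1 k e) = 0.
Proof. by apply/contract_pencil_bundle_incl_eq0; exists 0, 1; rewrite scale1r scale0r add0r. Qed.

Lemma contract_pencil_bundle_pullback_eq0 p (a : 'M[k]_(p, r)) Y :
  row_free a -> (p < n)%N -> contract pencil_bundle (a^T *m Y) = 0 -> Y = 0.
Proof.
move=> fa p_lt_n /contract_pencil_bundle_eq0 [al [be eY]].
have : ~~ row_free (al *: pen0 k e + be *: pen1 k e).
  rewrite /row_free -(mxrank_trMfree _ incl_free) -eY.
  by rewrite ltn_eqF // (leq_ltn_trans (mulmx_max_rank _ _) p_lt_n).
move/(contra (@pen_row_free _ _ al be)); rewrite negb_or !negbK => /andP [/eqP al0 /eqP be0].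
apply/eqP; rewrite -mxrank_eq0 -(mxrank_trMfree _ fa) eY al0 be0.
by rewrite !scale0r addr0 mulmx0 mxrank0.
Qed.

Lemma steiner_pencil_bundle : steiner pencil_bundle.
Proof.
apply: steiner_of_contract => x u x0; apply: contract_pencil_bundle_pullback_eq0 => //.
by rewrite /row_free rank_rV x0.
Qed.

Lemma homogeneous_pencil_bundle : homogeneous e pencil_bundle.
Proof.
by apply: homogeneous_presentation => a fa Y; apply: contract_pencil_bundle_pullback_eq0.
Qed.

Lemma simple_pencil_bundle : steiner_simple pencil_bundle.
Proof.
move=> P Q PQ.
have stable V : contract pencil_bundle (incl^T *m V) = 0 ->
    exists al be, V *m Q^T = al *: pen0 k e + be *: pen1 k e.
  move=> V0; apply/contract_pencil_bundle_incl_eq0.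
  by rewrite mulmxA -(contract_iso PQ) V0 mul0mx.
have [al [be E0]] := stable _ contract_pencil_bundle_pen0.
have [ga [de E1]] := stable _ contract_pencil_bundle_pen1.
have eQ : Q^T = al%:M := pen_stable_scalar E0 E1.
exists al; split; last by rewrite -[Q]trmxK eQ tr_scalar_mx.
apply: scalar_of_contract => [w | Z].
  exact/contract_presentation_surj/col_base_full.
by rewrite (contract_iso PQ) eQ mul_mx_scalar !contract_presentation linearZ -scalemxAl.
Qed.

Lemma not_homogeneous_swap : (0 < e)%N -> ~ homogeneous e.+1 pencil_bundle.
Proof.
move=> e_gt0 hom.
pose b := rowsub (widen_ord n_le_r \o tperm ord0 (inord 1)) (1%:M : 'M[k]_r).
have fb : row_free b by apply/rowsub1_free/inj_comp; [apply: widen_ord_inj | apply: perm_inj].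
have bTE : b^T = incl^T *m tperm_mx ord0 (inord 1).
  rewrite -tr_tperm_mx -trmx_mul -xrowE /b rowsub_comp; congr _^T.
  by apply/matrixP => i j; rewrite !mxE.
have [R uR kerR] := steiner_iso_kernel (hom _ _ incl_free fb).
have swapE V : contract pencil_bundle (incl^T *m V) = 0 ->
    exists al be, xrow ord0 (inord 1) (V *m R) = al *: pen0 k e + be *: pen1 k e.
  by move=> /kerR; rewrite bTE -mulmxA -xrowE => /contract_pencil_bundle_incl_eq0.
have [al [be E0]] := swapE _ contract_pencil_bundle_pen0.
have [ga [de E1]] := swapE _ contract_pencil_bundle_pen1.
exact: pen_swap_unstable e_gt0 uR E0 E1.
Qed.

Lemma not_homogeneous_shift : (n < r)%N -> ~ homogeneous e.+1 pencil_bundle.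
Proof.
move=> n_lt_r hom.
pose b := rowsub (lift ord0 \o widen_ord (n_lt_r : (n <= r')%N)) (1%:M : 'M[k]_r).
have fb : row_free b by apply/rowsub1_free/inj_comp; [apply: lift_inj | apply: widen_ord_inj].
have [R uR kerR] := steiner_iso_kernel (hom _ _ incl_free fb).
have /contract_pencil_bundle_eq0 [al [be E]] := kerR _ contract_pencil_bundle_pen0.
have row0 : row ord0 (al *: pen0 k e + be *: pen1 k e) = 0.
  rewrite -[al *: _ + _](inclTK (p := n.+1)) row_rowsub -E.
  have -> : widen_ord n_le_r ord0 = ord0 by apply/val_inj.
  by apply: row_trmx_rowsub1 => j; rewrite eq_sym neq_lift.
have := congr1 (fun v : 'rV_n.+1 => v 0 ord0) row0.
have := congr1 (fun v : 'rV_n.+1 => v 0 (inord 1)) row0.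
rewrite ![row _ _ _ _]mxE !pencilE !mxE /= inordK // !mulr0 !mulr1 addr0 add0r => be0 al0.
move: E; rewrite al0 be0 !scale0r addr0 mulmx0 => /eqP.
rewrite -mxrank_eq0 mxrank_trMfree // mxrankMfree ?row_free_unit //.
by rewrite (eqP (pen0_free _ _)).
Qed.

End Bundle.

Theorem corollary5p2p2 (k : closedFieldType) (r : nat) :
  (3 <= r)%N ->
  forall d : nat, (1 <= d <= r.-1)%N ->
  exists (t s : nat) (M : 'I_r -> 'M[k]_(t, s)),
    [/\ steiner M, steiner_simple M, homogeneous d.-1 M & ~ homogeneous d M].
Proof.
case: r => [|r'] // r_ge3 [|e] // /andP [_ e_lt_r].
exists _, _, (pencil_bundle k e_lt_r); split.
- exact: steiner_pencil_bundle.
- exact: simple_pencil_bundle.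
- exact: homogeneous_pencil_bundle.
- case: e e_lt_r => [|e] e_lt_r.
  + exact: not_homogeneous_shift.
  + exact: not_homogeneous_swap.
Qed.
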